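(* Let $T$ be a $k$-tree and $C$ a $k$-clique of $T$. Then $$k+\frac{\log_2 N(T;C)}{2}\le \mu(T;C)\le \frac{N(T;C)+2k-1}{2}.$$ The lower bound holds with equality if and only if $T$ is a $k$-star and $C$ is its base $k$-clique. If $T$ has at least $k+1$ vertices, the upper bound holds with equality if and only if $T$ is a path-type $k$-tree and $C$ is simplicial.
   Context: A $k$-tree is defined recursively: $K_k$ is a $k$-tree, and if $T$ is a $k$-tree then so is the graph obtained by joining a new vertex to all vertices of some $k$-clique of $T$; there are no others. A sub-$k$-tree is a subgraph that is itself a $k$-tree. $N(T;C)$ is the number of sub-$k$-trees containing $C$ and $\mu(T;C)$ is their average number of vertices. A $k$-star is a $k$-tree consisting of a $k$-clique (its base $k$-clique) together with some number $m\ge 0$ of further pairwise non-adjacent vertices each joined to all vertices of the base (for $m=1$, any $k$-clique of $K_{k+1}$ may serve as base). A $k$-leaf is a vertex lying in exactly one $(k+1)$-clique; a simplicial $k$-clique is one containing a $k$-leaf. A path-type $k$-tree is a $k$-tree that is $K_k$, $K_{k+1}$, or has exactly two $k$-leaves. *)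

From mathcomp Require Import all_boot.
From mathcomp Require Import boolp.
From Stdlib Require Import Reals.

Set Implicit Arguments.
Unset Strict Implicit.
Unset Printing Implicit Defensive.

Section KTrees.
Variable V : finType.

(* A graph is a pair (S, E): vertex set S and edge set E, edges being
   2-element subsets of V. *)

Definition cedges (X : {set V}) : {set {set V}} :=
  [set e in powerset X | #|e| == 2].

Definition is_clique (S : {set V}) (E : {set {set V}}) (X : {set V}) : bool :=
  (X \subset S) &&
  [forall u in X, forall w in X, (u != w) ==> ([set u; w] \in E)].

Definition nclique (S : {set V}) (E : {set {set V}}) (n : nat) (X : {set V}) : bool :=
  is_clique S E X && (#|X| == n).

Definition is_K (S : {set V}) (E : {set {set V}}) (n : nat) : bool :=
  (#|S| == n) && (E == cedges S).

Inductive ktree (k : nat) : {set V} -> {set {set V}} -> Prop :=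
| ktree_base (S : {set V}) : #|S| = k -> ktree k S (cedges S)
| ktree_step (S : {set V}) (E : {set {set V}}) (C : {set V}) (v : V) :
    ktree k S E -> nclique S E k C -> v \notin S ->
    ktree k (v |: S) (E :|: [set [set v; u] | u in C]).

Definition subktrees (k : nat) (S : {set V}) (E : {set {set V}}) (C : {set V})
  : {set {set V} * {set {set V}}} :=
  [set p : {set V} * {set {set V}} | `[< (p.1 \subset S) /\ (p.2 \subset E) /\ ktree k p.1 p.2 /\
               (C \subset p.1) /\ (cedges C \subset p.2) >]].

Definition ktN k S E C : nat := #|subktrees k S E C|.

Definition ktmu k S E C : R :=
  (INR (\sum_(p in subktrees k S E C) #|p.1|) / INR (ktN k S E C))%R.

Definition is_kstar (k : nat) (S : {set V}) (E : {set {set V}}) (B : {set V}) : bool :=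
  (B \subset S) && (#|B| == k) &&
  (E == cedges B :|: [set [set u; b] | u in S :\: B, b in B]).

Definition kleaf (k : nat) (S : {set V}) (E : {set {set V}}) (v : V) : bool :=
  (v \in S) && (#|[set X : {set V} | nclique S E k.+1 X && (v \in X)]| == 1).

Definition simplicial (k : nat) (S : {set V}) (E : {set {set V}}) (C : {set V}) : bool :=
  [exists v in C, kleaf k S E v].

Definition path_type (k : nat) (S : {set V}) (E : {set {set V}}) : bool :=
  is_K S E k || is_K S E k.+1 || (#|[set v in S | kleaf k S E v]| == 2).

End KTrees.

Definition log2 (x : R) : R := (ln x / ln 2)%R.

(* Sub-k-trees containing C are induced subgraphs, and their vertex sets are exactly the
   sets grown from C by repeatedly adding a vertex whose neighbourhood in the current set
   is a k-clique.  This family F contains C, is closed under union, and is accessible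
   (every member other than C stays in F after removing a suitable vertex).  Hence
   N = |F| and mu = k + s / N, where s is the sum over X in F of |X \ C|.

   For any such family, split it along an atom a (a vertex with C + a in F) into the
   members without a and those with a; adding a injects the first part into the second,
   and (x + y) log2 (x + y) <= x log2 x + y log2 y + 2y for 0 < x <= y gives by induction
   2 s >= N log2 N, with equality exactly for Boolean intervals [C, C + W].  Accessibility
   gives |X \ C| <= #{Y in F | Y proper subset of X}, and summing gives 2 s <= N (N - 1),
   with equality exactly when F is a chain.

   Finally, F is a Boolean interval iff T is a k-star with base C, and (when T has more
   than k vertices) F is a chain iff T is path-type and C is simplicial: along a chain
   each new vertex sees the previous one, so the only k-leaves are the last vertex and
   the vertex of C missed by the second one; conversely, with at most one k-leaf outside
   C no member of F has two different one-vertex extensions in F. *)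

From mathcomp Require Import all_boot.
From mathcomp Require Import boolp.
From mathcomp Require Import zify.
From Stdlib Require Import Reals Lra.

Set Implicit Arguments.
Unset Strict Implicit.
Unset Printing Implicit Defensive.

(** * Graphs given by edge sets *)

Local Notation star v D := [set [set v; u] | u in D].

Section Graphs.
Variable V : finType.
Implicit Types (X Y D S : {set V}) (E : {set {set V}}).

Lemma card_cedges X : #|cedges X| = 'C(#|X|, 2).
Proof. by rewrite -cards_draws; apply: eq_card => A; rewrite !inE. Qed.

Lemma in_cedges2 X u w :
  ([set u; w] \in cedges X) = [&& u \in X, w \in X & u != w].
Proof. by rewrite !inE cards2 subUset !sub1set; case: (u != w); rewrite ?andbT ?andbF. Qed.

Lemma cedgesP X e :
  reflect (exists u w, [/\ u \in X, w \in X, u != w & e = [set u; w]]) (e \in cedges X).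
Proof.
apply: (iffP idP) => [|[u [w [uX wX uw ->]]]]; last by rewrite in_cedges2 uX wX.
rewrite !inE => /andP [+ /cards2P [u [w [uw ee]]]]; rewrite ee subUset !sub1set.
by case/andP=> uX wX; exists u, w.
Qed.

Lemma cedgesS X Y : X \subset Y -> cedges X \subset cedges Y.
Proof.
move=> XY; apply/subsetP => e /cedgesP [u [w [uX wX uw ->]]].
by rewrite in_cedges2 (subsetP XY _ uX) (subsetP XY _ wX).
Qed.

Lemma set2_inj (w : V) : injective (fun u => [set w; u]).
Proof.
move=> u u' /= eq_uu'; have : u \in [set w; u'] by rewrite -eq_uu' !inE eqxx orbT.
rewrite !inE => /orP [/eqP uw | /eqP //]; subst u; move: eq_uu'; rewrite setUid => eq_wu'.
have : u' \in [set w] by rewrite eq_wu' !inE eqxx orbT.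
by move/set1P.
Qed.

Definition nbhd E w : {set V} := [set u | [set w; u] \in E].

Lemma in_nbhd E w u : (u \in nbhd E w) = ([set w; u] \in E).
Proof. by rewrite inE. Qed.

Lemma nbhdC E w u : (u \in nbhd E w) = (w \in nbhd E u).
Proof. by rewrite !in_nbhd setUC. Qed.

Definition clique E X := [forall u in X, forall w in X, (u != w) ==> ([set u; w] \in E)].

Lemma cliqueP E X :
  reflect (forall u w, u \in X -> w \in X -> u != w -> [set u; w] \in E) (clique E X).
Proof.
apply: (iffP forall_inP) => [cX u w uX wX uw | cX u uX].
  by move/forall_inP: (cX u uX) => /(_ w wX); rewrite uw.
by apply/forall_inP => w wX; apply/implyP; apply: cX.
Qed.

Lemma clique_cedges E X : clique E X = (cedges X \subset E).
Proof.
apply/cliqueP/subsetP => [cX e /cedgesP [u [w [uX wX uw ->]]] | sXE u w uX wX uw].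
  exact: cX.
by apply: sXE; rewrite in_cedges2 uX wX.
Qed.

Lemma cliqueS E X Y : Y \subset X -> clique E X -> clique E Y.
Proof. by rewrite !clique_cedges => /cedgesS; apply: subset_trans. Qed.

Lemma cliqueW E E' X : E \subset E' -> clique E X -> clique E' X.
Proof. by rewrite !clique_cedges => EE' /subset_trans; apply. Qed.

Lemma cliqueU1 E w D : clique E D -> D \subset nbhd E w -> clique E (w |: D).
Proof.
move=> /cliqueP cD Dw; apply/cliqueP => a b; rewrite !in_setU1.
case/orP => [/eqP -> | aD]; case/orP => [/eqP -> | bD]; rewrite ?eqxx //.
- by rewrite -in_nbhd (subsetP Dw).
- by rewrite setUC -in_nbhd (subsetP Dw).
- exact: cD.
Qed.

Lemma ncliqueP S E k X :
  reflect [/\ X \subset S, clique E X & #|X| = k] (nclique S E k X).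
Proof.
rewrite /nclique /is_clique -/(clique E X).
by apply: (iffP andP) => [[/andP [-> ->] /eqP] | [-> -> ->]].
Qed.

Lemma setI_cedgesU1 E X w : w \notin X ->
  E :&: cedges (w |: X) = (E :&: cedges X) :|: [set [set w; u] | u in nbhd E w :&: X].
Proof.
move=> wX; apply/setP => e; rewrite in_setU !in_setI; apply/idP/idP.
  case/andP=> eE /cedgesP [a [b [+ + ab ee]]]; rewrite !in_setU1.
  have imw u : u \in X -> [set w; u] \in E -> [set w; u] \in [set [set w; u] | u in nbhd E w :&: X].
    by move=> uX wuE; apply/imsetP; exists u; rewrite // in_setI in_nbhd wuE.
  case: (eqVneq a w) => [aw | aw] /=.
    move=> _; rewrite -aw eq_sym (negbTE ab) /= => bX.
    by rewrite ee aw imw ?orbT // -aw -ee.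
  move=> aX; case: (eqVneq b w) => [bw | bw] /= bX.
    by rewrite ee bw setUC imw ?orbT // setUC -bw -ee.
  by rewrite eE ee in_cedges2 aX bX ab.
case/orP => [/andP [eE eX] | /imsetP [u]]; first by rewrite eE (subsetP (cedgesS (subsetUr _ _)) _ eX).
rewrite in_setI in_nbhd => /andP [wuE uX] ->; rewrite wuE in_cedges2 setU11 in_setU1 uX orbT.
by apply: contraNneq wX => ->.
Qed.

Lemma card_setI_cedgesU1 E X w : w \notin X ->
  #|E :&: cedges (w |: X)| = #|E :&: cedges X| + #|nbhd E w :&: X|.
Proof.
move=> wX; rewrite setI_cedgesU1 // -(card_imset _ (@set2_inj w)) -cardsUI.
suff -> : E :&: cedges X :&: [set [set w; u] | u in nbhd E w :&: X] = set0.
  by rewrite cards0 addn0.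
apply/setP => e; rewrite !in_setI in_set0; apply/negbTE/negP.
case/andP => /andP [_ eX] /imsetP [u _ ee].
by move: eX; rewrite ee in_cedges2 (negbTE wX).
Qed.

Lemma nbhd_step S E D v : E \subset cedges S -> D \subset S -> v \notin S ->
  nbhd (E :|: star v D) v = D.
Proof.
move=> ES DS vS; apply/setP => u; rewrite in_nbhd in_setU; apply/idP/idP.
  case/orP => [/(subsetP ES) | /imsetP [u' u'D /set2_inj -> //]].
  by rewrite in_cedges2 (negbTE vS).
by move=> uD; apply/orP; right; apply/imsetP; exists u.
Qed.

Lemma setI_cedges_step E D v X : v \notin X ->
  (E :|: star v D) :&: cedges X = E :&: cedges X.
Proof.
move=> vX; apply/setP => e; rewrite !in_setI in_setU.
case: (e \in E) => //=; apply/negbTE/negP => /andP [/imsetP [u _ ->]].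
by rewrite in_cedges2 (negbTE vX).
Qed.

End Graphs.

(** * k-trees grown from a k-clique *)

Section KTrees.
Variable V : finType.
Implicit Types (X Y S C D : {set V}) (E : {set {set V}}) (k : nat).

Lemma nbhd_stepI E D v w Y : w != v -> v \notin Y ->
  nbhd (E :|: star v D) w :&: Y = nbhd E w :&: Y.
Proof.
move=> wv vY; apply/setP => u; rewrite !in_setI !in_nbhd in_setU.
case uY: (u \in Y); rewrite ?andbF ?andbT //; case: (_ \in E) => //=.
apply/negbTE/imsetP => -[d _ wud].
have : w \in [set v; d] by rewrite -wud setU11.
rewrite !inE (negbTE wv) => /eqP wd; subst d.
by move: vY; rewrite -(set2_inj (etrans wud (setUC _ _))) uY.
Qed.

Lemma nbhd_step_other E D v w : w != v -> w \notin D -> nbhd (E :|: star v D) w = nbhd E w.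
Proof.
move=> wv wD; apply/setP => u; rewrite !in_nbhd in_setU; case: (_ \in E) => //=.
apply/negbTE/imsetP => -[d dD wud].
have : w \in [set v; d] by rewrite -wud setU11.
by rewrite !inE (negbTE wv) => /eqP wd; move: wD; rewrite wd dD.
Qed.

Lemma ktree_edges k S E : ktree k S E -> E \subset cedges S.
Proof.
elim => [S0 _ | S0 E0 C0 v _ IH /ncliqueP [CS _ _] vS]; first exact: subxx.
rewrite subUset (subset_trans IH (cedgesS (subsetUr _ _))) /=.
apply/subsetP => e /imsetP [u uC ->].
rewrite in_cedges2 setU11 in_setU1 (subsetP CS _ uC) orbT /=.
by apply: contraNneq vS => ->; apply: (subsetP CS).
Qed.

Lemma ktree_edgeP k S E u w : ktree k S E -> [set u; w] \in E -> [/\ u \in S, w \in S & u != w].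
Proof. by move=> kt /(subsetP (ktree_edges kt)); rewrite in_cedges2 => /and3P. Qed.

Lemma bin2_add_bin2S n : 'C(n, 2) + 'C(n.+1, 2) = n * n.
Proof.
elim: n => // n IH.
have binS2 m : 'C(m.+1, 2) = 'C(m, 2) + m by rewrite binS bin1.
move: IH; rewrite !binS2; lia.
Qed.

Lemma ktree_edge_count_le k S E X : ktree k S E -> X \subset S -> k <= #|X| ->
  #|E :&: cedges X| + 'C(k.+1, 2) <= k * #|X|.
Proof.
move=> kt; elim: kt X => [S0 cardS0 | S0 E0 D v kt IH /ncliqueP [DS _ cardD] vS] X XS kX.
  have -> : X = S0 by apply/eqP; rewrite eqEcard XS cardS0 kX.
  by rewrite setIid card_cedges cardS0 -bin2_add_bin2S.
set X0 := X :\ v.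
have X0S0 : X0 \subset S0.
  by apply/subsetP => x /setD1P [xv /(subsetP XS)]; rewrite in_setU1 (negbTE xv).
have [vX | vX] := boolP (v \in X); last first.
  have eX0 : X0 = X by apply/setP => x; rewrite in_setD1; case: eqVneq => // ->; rewrite (negbTE vX).
  by rewrite setI_cedges_step // IH // -eX0.
have vX0 : v \notin X0 by rewrite setD11.
rewrite -(setD1K vX) -/X0 card_setI_cedgesU1 // setI_cedges_step //.
rewrite (nbhd_step (ktree_edges kt) DS vS) cardsU1 vX0.
have leDk : #|D :&: X0| <= k by rewrite -cardD subset_leq_card ?subsetIl.
have leDX0 : #|D :&: X0| <= #|X0| by rewrite subset_leq_card ?subsetIr.
have [kX0 | X0k] := leqP k #|X0|; first by move: (IH X0 X0S0 kX0) leDk; clear; lia.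
have cardX : #|X| = #|X0|.+1 by rewrite -(setD1K vX) cardsU1 vX0.
have -> : k = #|X0|.+1 by move: kX X0k; rewrite cardX; clear; lia.
have leX0 : #|E0 :&: cedges X0| <= 'C(#|X0|, 2).
  by rewrite -card_cedges subset_leq_card ?subsetIr.
have := bin2_add_bin2S #|X0|.+1; rewrite binS bin1.
move: leX0 leDX0; clear; lia.
Qed.

End KTrees.

Section Building.
Variable V : finType.
Implicit Types (X Y S C D : {set V}) (E : {set {set V}}) (k : nat).

(* The vertex sets of the sub-k-trees containing [C]; see [subtree_vsetsE]. *)
Inductive kbuilt k E C : {set V} -> Prop :=
| kbuilt0 : kbuilt k E C C
| kbuiltU1 X w : kbuilt k E C X -> w \notin X -> #|nbhd E w :&: X| = k ->
    clique E (nbhd E w :&: X) -> kbuilt k E C (w |: X).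

Lemma kbuilt_sup k E C X : kbuilt k E C X -> C \subset X.
Proof. by elim => // X0 w _ CX0 _ _ _; rewrite (subset_trans CX0) ?subsetUr. Qed.

Lemma kbuilt_trans k E C Y Z : kbuilt k E C Y -> kbuilt k E Y Z -> kbuilt k E C Z.
Proof. by move=> bY; elim => // X w _ IH; apply: kbuiltU1. Qed.

Lemma kbuilt_sub k S E C X : ktree k S E -> 0 < k -> C \subset S -> kbuilt k E C X ->
  X \subset S.
Proof.
move=> kt k_gt0 CS; elim => // X0 w _ X0S _ cardN _.
rewrite subUset X0S andbT sub1set.
have /card_gt0P [u] : 0 < #|nbhd E w :&: X0| by rewrite cardN.
by rewrite in_setI in_nbhd => /andP [/(ktree_edgeP kt) []].
Qed.

Lemma kbuilt_edge_count k E C X : clique E C -> #|C| = k -> kbuilt k E C X ->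
  #|E :&: cedges X| + 'C(k.+1, 2) = k * #|X|.
Proof.
move=> cC cardC; elim => [|X0 w _ IH wX0 cardN _].
  by rewrite (setIidPr _) -?clique_cedges // card_cedges cardC bin2_add_bin2S.
by rewrite card_setI_cedgesU1 // cardsU1 wX0 cardN; lia.
Qed.

Lemma kbuilt_ktree k E C X : clique E C -> #|C| = k -> kbuilt k E C X ->
  ktree k X (E :&: cedges X).
Proof.
move=> cC cardC; elim => [|X0 w _ IH wX0 cardN cN].
  by rewrite (setIidPr _) -?clique_cedges //; apply: ktree_base.
rewrite setI_cedgesU1 //; apply: ktree_step => //; apply/ncliqueP; split; rewrite ?subsetIr //.
move/cliqueP: cN => cN; apply/cliqueP => a b aN bN ab.
rewrite in_setI cN //= in_cedges2 ab andbT.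
by case/setIP: aN => _ ->; case/setIP: bN.
Qed.

Lemma kbuilt_mem_step k E C Y y : kbuilt k E C Y -> y \in Y -> y \notin C ->
  exists2 X, kbuilt k E C X &
    [/\ X \subset Y :\ y, #|nbhd E y :&: X| = k & clique E (nbhd E y :&: X)].
Proof.
elim => [|Y0 w bY0 IH wY0 cardN cN]; first by move=> ->.
rewrite in_setU1 => /orP [/eqP -> | yY0] yC.
  exists Y0 => //; split => //; apply/subsetP => z zY0; rewrite in_setD1 in_setU1 zY0 orbT andbT.
  by apply: contraNneq wY0 => <-.
have [X bX [XY0 cardNX cNX]] := IH yY0 yC; exists X => //; split => //.
by rewrite (subset_trans XY0) // setSD // subsetU1.
Qed.

Lemma kbuilt_step_edges k E C D v X : kbuilt k E C X -> v \notin X ->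
  kbuilt k (E :|: star v D) C X.
Proof.
elim => [_ | X0 w _ IH wX0 cardN cN]; first exact: kbuilt0.
rewrite in_setU1 negb_or eq_sym => /andP [wv vX0].
have eN := nbhd_stepI E D wv vX0.
apply: kbuiltU1; rewrite ?eN //; first exact: IH.
by apply: cliqueW cN; apply: subsetUl.
Qed.

Lemma kbuilt_shift k S E D v X : E \subset cedges S -> v \notin S ->
  kbuilt k E D X -> v \notin X -> kbuilt k (E :|: star v D) (v |: D) (v |: X).
Proof.
move=> ES vS; elim => [_ | X0 w bX0 IH wX0 cardN cN]; first exact: kbuilt0.
rewrite in_setU1 negb_or eq_sym => /andP [wv vX0].
have wD : w \notin D by apply: contra wX0; apply: (subsetP (kbuilt_sup bX0)).
have vNw : v \notin nbhd E w.
  by rewrite in_nbhd; apply: contra vS => /(subsetP ES); rewrite in_cedges2 => /and3P [].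
have eN : nbhd (E :|: star v D) w :&: (v |: X0) = nbhd E w :&: X0.
  apply/setP => u; rewrite (nbhd_step_other _ wv wD) !in_setI in_setU1.
  by case: eqVneq => [-> | //]; rewrite (negbTE vNw).
rewrite setUCA; apply: kbuiltU1; rewrite ?eN ?in_setU1 ?negb_or ?wv //; first exact: IH.
by apply: cliqueW cN; apply: subsetUl.
Qed.

Lemma kbuilt_new_clique k S E D v C : E \subset cedges S -> D \subset S -> v \notin S ->
  clique E D -> #|D| = k -> clique (E :|: star v D) C -> #|C| = k -> v \in C ->
  kbuilt k (E :|: star v D) C (v |: D).
Proof.
set E' := E :|: star v D => ES DS vS cD cardD cC cardC vC.
have CvD : C :\ v \subset D.
  rewrite -(nbhd_step ES DS vS); apply/subsetP => x /setD1P [xv xC].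
  by rewrite in_nbhd; move/cliqueP: cC; apply; rewrite // eq_sym.
have cardCv : #|C :\ v| = k.-1 by rewrite -cardC (cardsD1 v C) vC.
have /card_gt0P [d] : 0 < #|D :\: (C :\ v)|.
  rewrite cardsD (setIidPr CvD) cardCv cardD subn_gt0 ltn_predL -cardC card_gt0.
  by apply/set0Pn; exists v.
rewrite in_setD => /andP [dCv dD].
have dv : d != v by apply: contraNneq vS => <-; apply: (subsetP DS).
have dC : d \notin C by apply: contra dCv; rewrite in_setD1 dv.
have eCv : C :\ v = D :\ d.
  have cardDd : #|D :\ d| = k.-1 by rewrite -cardD (cardsD1 d D) dD.
  apply/eqP; rewrite eqEcard cardDd cardCv leqnn andbT.
  by apply/subsetP => x xCv; rewrite in_setD1 (subsetP CvD _ xCv) andbT; apply: contraNneq dCv => <-.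
have eC : C = v |: (D :\ d) by rewrite -eCv setD1K.
have CNd : C \subset nbhd E' d.
  rewrite eC; apply/subsetP => x; rewrite in_setU1 in_nbhd in_setU => /orP [/eqP -> | /setD1P [xd xD]].
    by apply/orP; right; apply/imsetP; exists d; rewrite // setUC.
  by move/cliqueP: cD => -> //; rewrite eq_sym.
have -> : v |: D = d |: C by rewrite eC setUCA setD1K.
by apply: kbuiltU1; rewrite ?(setIidPr CNd) //; apply: kbuilt0.
Qed.

(* If the new vertex [v] lies in [C], first trade the vertex of [D] outside [C] for [v] to
   reach [v |: D], then replay the construction of the smaller k-tree from [D]. *)
Lemma ktree_kbuilt k S E C : ktree k S E -> nclique S E k C -> kbuilt k E C S.
Proof.
move=> kt; elim: kt C => [S0 cardS0 | S0 E0 D v kt IH cD vS] C /ncliqueP [CS cC cardC].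
  have -> : C = S0 by apply/eqP; rewrite eqEcard CS cardS0 cardC leqnn.
  exact: kbuilt0.
have ES := ktree_edges kt.
have /ncliqueP [DS cliqD cardD] := cD.
have eN := nbhd_step ES DS vS.
have [vC | vC] := boolP (v \in C); last first.
  have CS0 : C \subset S0.
    apply/subsetP => x xC; move: (subsetP CS _ xC); rewrite in_setU1.
    by case: eqVneq vC => // <-; rewrite xC.
  have cC0 : clique E0 C.
    by move: cC; rewrite !clique_cedges => /setIidPr <-; rewrite setI_cedges_step ?subsetIl.
  have /IH bS0 : nclique S0 E0 k C by apply/ncliqueP.
  have {}bS0 := kbuilt_step_edges D bS0 vS.
  by apply: kbuiltU1; rewrite // eN (setIidPl DS) //; apply: cliqueW cliqD; apply: subsetUl.
apply: kbuilt_trans (kbuilt_new_clique ES DS vS cliqD cardD cC cardC vC) _.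
exact: (kbuilt_shift ES vS (IH D cD) vS).
Qed.

End Building.

(** * Real inequalities *)

Section RealFacts.
Local Open Scope R_scope.

Lemma ln_le_sub1 t : 0 < t -> ln t <= t - 1.
Proof. by move=> t_gt0; have := exp_ineq1_le (ln t); rewrite exp_ln //; lra. Qed.

Lemma ln2_gt0 : 0 < ln 2.
Proof. by have := ln_lt_2; lra. Qed.

Lemma Rdiv_le_cross a b c d : 0 < b -> 0 < d -> (a / b <= c / d <-> a * d <= c * b).
Proof.
move=> b_gt0 d_gt0; have bd_gt0 : 0 < b * d by apply: Rmult_lt_0_compat.
have -> : a / b = (a * d) / (b * d) by field; lra.
have -> : c / d = (c * b) / (b * d) by field; lra.
split => [le | le]; last by apply: Rmult_le_compat_r => //; apply/Rlt_le/Rinv_0_lt_compat.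
have := Rmult_le_compat_r (b * d) _ _ (Rlt_le _ _ bd_gt0) le.
by rewrite /Rdiv !Rmult_assoc Rinv_l ?Rmult_1_r //; apply: Rgt_not_eq.
Qed.

Lemma Rdiv_eq_cross a b c d : 0 < b -> 0 < d -> (a / b = c / d <-> a * d = c * b).
Proof.
move=> b_gt0 d_gt0; split => [eq_ac | eq_ac].
  have -> : a * d = (a / b) * b * d by field; lra.
  by rewrite eq_ac; field; lra.
have -> : a / b = (a * d) / (b * d) by field; lra.
by rewrite eq_ac; field; lra.
Qed.

(* From [ln t <= t - 1] at [t = (x + y) / (2 x)] and at [t = (x + y) / (2 y)]. *)
Lemma xlnx_add_le x y : 0 < x -> 0 < y ->
  (x + y) * ln (x + y) <= x * ln x + y * ln y + (x + y) * ln 2.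
Proof.
move=> x_gt0 y_gt0.
have bound z : 0 < z -> z * ln (x + y) - z * ln 2 - z * ln z <= (x + y) / 2 - z.
  move=> z_gt0; have t_gt0 : 0 < (x + y) / (2 * z) by apply: Rdiv_lt_0_compat; lra.
  have := ln_le_sub1 t_gt0.
  rewrite /Rdiv ln_mult ?ln_Rinv ?ln_mult; try lra; last by apply: Rinv_0_lt_compat; lra.
  move=> /(Rmult_le_compat_l z _ _ (Rlt_le _ _ z_gt0)).
  have -> : z * ((x + y) * / (2 * z) - 1) = (x + y) / 2 - z by field; lra.
  lra.
have := bound x x_gt0; have := bound y y_gt0; lra.
Qed.

Lemma xlog2x_add x y : 0 < x -> x <= y ->
  (x + y) * log2 (x + y) <= x * log2 x + y * log2 y + 2 * y /\
  ((x + y) * log2 (x + y) = x * log2 x + y * log2 y + 2 * y <-> x = y).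
Proof.
move=> x_gt0 xy; have l2 := ln2_gt0; have yx := xlnx_add_le x_gt0 (Rlt_le_trans _ _ _ x_gt0 xy).
have e : x * log2 x + y * log2 y + 2 * y = (x * ln x + y * ln y + 2 * y * ln 2) / ln 2.
  by rewrite /log2; field; lra.
rewrite e /log2 Rmult_div_assoc Rdiv_le_cross // Rdiv_eq_cross //.
have gap : 0 <= (y - x) * ln 2 by apply: Rmult_le_pos; lra.
split; first by nra.
split => [eq_xy | <-]; last by rewrite Rplus_diag ln_mult; [ring | lra | lra].
have : (y - x) * ln 2 = 0 by nra.
by case/Rmult_integral; lra.
Qed.

End RealFacts.

(** * Accessible union-closed set systems *)

Section SetSystems.
Variable V : finType.
Implicit Types (X Y Z B W : {set V}) (F : {set {set V}}).

Definition accessible F B :=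
  forall X, X \in F -> X != B -> exists2 x, x \in X :\: B & X :\ x \in F.

Definition antimatroid F B := [/\ B \in F, {in F, forall X, B \subset X},
  {in F &, forall X Y, X :|: Y \in F} & accessible F B].

Definition excess F B := \sum_(X in F) #|X :\: B|.

Definition cube B W : {set {set V}} := [set X : {set V} | (B \subset X) && (X \subset B :|: W)].

Definition below F X := [set Y in F | Y \proper X].

Definition chain F := [forall X in F, forall Y in F, (X \subset Y) || (Y \subset X)].

Lemma chainP F : reflect {in F &, forall X Y, (X \subset Y) || (Y \subset X)} (chain F).
Proof.
apply: (iffP forall_inP) => [ch X Y XF | ch X XF]; last by apply/forall_inP => Y YF; apply: ch.
by move/forall_inP: (ch X XF); apply.
Qed.

Lemma accessible_ind F B (P : {set V} -> Prop) : accessible F B -> P B ->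
  (forall X x, X \in F -> x \in X :\: B -> X :\ x \in F -> P (X :\ x) -> P X) ->
  {in F, forall X, P X}.
Proof.
move=> accF PB PS X; have [n] := ubnP #|X|; elim: n X => // n IH X /ltnSE leXn XF.
have [-> // | XB] := eqVneq X B.
have [x xXB X'F] := accF X XF XB; apply: (PS X x) => //; apply: IH X'F.
by case/setDP: xXB => xX _; apply: leq_trans (proper_card (properD1 xX)) leXn.
Qed.

Lemma card_setD1D X B x : x \in X :\: B -> #|X :\: B| = #|(X :\ x) :\: B|.+1.
Proof. by move=> xXB; rewrite (cardsD1 x (X :\: B)) xXB setDDl setUC -setDDl. Qed.

Lemma card_below F X : #|below F X| = \sum_(Y in F) (Y \proper X).
Proof.
rewrite -sum1_card big_mkcond [RHS]big_mkcond; apply: eq_bigr => Y _.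
by rewrite !inE; case: (Y \in F); case: (Y \proper X).
Qed.

Lemma card_setD_le_below F B X : accessible F B -> X \in F -> #|X :\: B| <= #|below F X|.
Proof.
move=> accF; move: X; apply: (accessible_ind (P := fun X => #|X :\: B| <= #|below F X|) accF).
  by rewrite setDv cards0.
move=> X x XF xXB X'F IH.
have X'X : X :\ x \proper X by case/setDP: xXB => xX _; apply: properD1.
have sub : (X :\ x) |: below F (X :\ x) \subset below F X.
  apply/subsetP => Y; rewrite in_setU1 => /orP [/eqP -> | ]; first by rewrite inE X'F.
  by rewrite !inE => /andP [-> /proper_sub_trans]; apply; apply: subD1set.
have := subset_leq_card sub; rewrite cardsU1 inE properxx andbF add1n (card_setD1D xXB).
exact: leq_ltn_trans IH.
Qed.

Lemma card_below_le_chain F B X : {in F, forall X, B \subset X} -> accessible F B -> chain F ->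
  X \in F -> #|below F X| <= #|X :\: B|.
Proof.
move=> supF accF /chainP ch; move: X.
apply: (accessible_ind (P := fun X => #|below F X| <= #|X :\: B|) accF) => [|X x XF xXB X'F IH].
  rewrite setDv cards0 leqn0 cards_eq0; apply/eqP/setP => Y; rewrite !inE.
  by apply/negbTE; apply/andP => -[/supF BY]; rewrite properE BY andbF.
have xX : x \in X by case/setDP: xXB.
have sub : below F X \subset (X :\ x) |: below F (X :\ x).
  apply/subsetP => Y; rewrite in_setU1 !inE => /andP [YF YX]; rewrite YF /=.
  case/orP: (ch _ _ YF X'F) => [YX' | X'Y]; first by rewrite properEneq YX' andbT; case: eqVneq.
  have [-> // | neY] := eqVneq Y (X :\ x).
  have : X :\ x \proper Y by rewrite properEneq eq_sym neY X'Y.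
  move/proper_card; have := proper_card YX; rewrite (cardsD1 x X) xX.
  by move=> lt1 lt2; move: (leq_ltn_trans lt2 lt1); rewrite add1n ltnn.
have := subset_leq_card sub; rewrite cardsU1 (card_setD1D xXB).
by move=> /leq_trans; apply; rewrite -add1n leq_add ?leq_b1.
Qed.

(* A pair [X != Y] contributes at most one proper inclusion, and exactly one iff it is
   comparable. *)
Lemma sum_card_below F :
  2 * \sum_(X in F) #|below F X| <= #|F| * #|F|.-1 ?= iff chain F.
Proof.
have pair X Y : (Y \proper X) + (X \proper Y) <= (X != Y) ?= iff (X \subset Y) || (Y \subset X).
  have [-> | neXY] := eqVneq X Y; first by rewrite properxx subxx; apply/leqif_refl.
  rewrite !properEneq eq_sym neXY /=; apply/leqifP.
  case sXY: (X \subset Y); case sYX: (Y \subset X) => //=.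
  by case/negP: neXY; rewrite eqEsubset sXY sYX.
have -> : 2 * \sum_(X in F) #|below F X| =
    \sum_(X in F) \sum_(Y in F) ((Y \proper X) + (X \proper Y)).
  rewrite mul2n -addnn; transitivity (\sum_(X in F) \sum_(Y in F) (Y \proper X) +
    \sum_(X in F) \sum_(Y in F) (X \proper Y)).
    by congr addn; [|rewrite [RHS]exchange_big]; apply: eq_bigr => X _; rewrite card_below.
  by rewrite -big_split; apply: eq_bigr => X _; rewrite -big_split.
have -> : #|F| * #|F|.-1 = \sum_(X in F) \sum_(Y in F) (X != Y).
  rewrite -sum_nat_const; apply: eq_bigr => X XF.
  rewrite (cardsD1 X F) XF add1n /= -sum1_card big_mkcond [RHS]big_mkcond.
  by apply: eq_bigr => Y _; rewrite in_setD1 andbC eq_sym; case: (Y \in F); case: (X == Y).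
by apply: leqif_sum => X _; apply: leqif_sum => Y _; apply: pair.
Qed.

Lemma excess_leqif F B : {in F, forall X, B \subset X} -> accessible F B ->
  2 * excess F B <= #|F| * #|F|.-1 ?= iff chain F.
Proof.
move=> supF accF.
have le1 : excess F B <= \sum_(X in F) #|below F X|
    ?= iff [forall X in F, #|X :\: B| == #|below F X|].
  by apply: leqif_sum => X XF; apply/leqif_eq/card_setD_le_below.
have mul2_mono : {mono muln 2 : m n / m <= n} by move=> m n; rewrite leq_pmul2l.
rewrite -(mono_leqif mul2_mono) in le1.
suff <- : [forall X in F, #|X :\: B| == #|below F X|] && chain F = chain F.
  exact: leqif_trans le1 (sum_card_below F).
apply: andb_idl => ch; apply/forall_inP => X XF.
by rewrite eqn_leq card_setD_le_below ?card_below_le_chain.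
Qed.

Lemma chain_of_unique_step F B : {in F, forall X, B \subset X} -> accessible F B ->
  (forall X a b, X \in F -> a \notin X -> b \notin X -> a |: X \in F -> b |: X \in F -> a = b) ->
  chain F.
Proof.
move=> supF accF uniq; apply/chainP => X Y; have [n] := ubnP (#|X| + #|Y|).
elim: n X Y => // n IH X Y /ltnSE leXYn XF YF.
have [-> | XB] := eqVneq X B; first by rewrite supF.
have [-> | YB] := eqVneq Y B; first by rewrite supF ?orbT.
have [x /setDP [xX _] X'F] := accF X XF XB; have [y /setDP [yY _] Y'F] := accF Y YF YB.
have cardX : #|X| = #|X :\ x|.+1 by rewrite (cardsD1 x X) xX.
have cardY : #|Y| = #|Y :\ y|.+1 by rewrite (cardsD1 y Y) yY.
have IH' X0 Y0 : X0 \in F -> Y0 \in F -> #|X0| + #|Y0| < #|X| + #|Y| ->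
    (X0 \subset Y0) || (Y0 \subset X0).
  by move=> X0F Y0F lt0; apply: IH => //; apply: leq_trans lt0 leXYn.
have ltX : #|X :\ x| + #|Y| < #|X| + #|Y| by rewrite cardX addSn.
have ltY : #|X| + #|Y :\ y| < #|X| + #|Y| by rewrite cardY addnS.
have ltXY : #|X :\ x| + #|Y :\ y| < #|X| + #|Y| by rewrite cardX cardY; lia.
case/orP: (IH' _ _ X'F YF ltX) => [X'Y | YX']; last first.
  by rewrite (subset_trans YX' (subD1set _ _)) orbT.
case/orP: (IH' _ _ XF Y'F ltY) => [XY' | Y'X].
  by rewrite (subset_trans XY' (subD1set _ _)).
have [eX'Y | neX'Y] := eqVneq (X :\ x) Y; first by rewrite -eX'Y subD1set orbT.
have [eY'X | neY'X] := eqVneq (Y :\ y) X; first by rewrite -eY'X subD1set.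
have ltX'Y : #|X :\ x| < #|Y| by apply: proper_card; rewrite properEneq neX'Y X'Y.
have ltY'X : #|Y :\ y| < #|X| by apply: proper_card; rewrite properEneq neY'X Y'X.
rewrite cardX cardY in ltX'Y ltY'X.
have eX'Y' : X :\ x = Y :\ y.
  case/orP: (IH' _ _ X'F Y'F ltXY) => [sXY | sYX]; apply/eqP.
    by rewrite eqEcard sXY; move: ltX'Y ltY'X; clear; lia.
  by rewrite eq_sym eqEcard sYX; move: ltX'Y ltY'X; clear; lia.
have exy : x = y.
  apply: (uniq (X :\ x)); rewrite ?setD11 ?setD1K // eX'Y' ?setD11 ?setD1K //.
by rewrite -(setD1K xX) -(setD1K yY) eX'Y' exy subxx.
Qed.

Definition fam_with F (a : V) := F :&: [set X : {set V} | a \in X].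
Definition fam_without F (a : V) := F :\: [set X : {set V} | a \in X].

Lemma in_fam_with F a X : (X \in fam_with F a) = (X \in F) && (a \in X).
Proof. by rewrite !inE. Qed.

Lemma in_fam_without F a X : (X \in fam_without F a) = (X \in F) && (a \notin X).
Proof. by rewrite !inE andbC. Qed.

Lemma accessible_atom F B X : accessible F B -> X \in F -> X != B ->
  exists2 a, a \notin B & a |: B \in F.
Proof.
move=> accF; have [n] := ubnP #|X|; elim: n X => // n IH X /ltnSE leXn XF XB.
have [x /setDP [xX xB] X'F] := accF X XF XB.
have [eB | neB] := eqVneq (X :\ x) B; first by exists x; rewrite // -eB setD1K.
by apply: IH X'F neB; apply: leq_trans (proper_card (properD1 xX)) leXn.
Qed.

Section Atom.
Variables (F : {set {set V}}) (B : {set V}) (a : V).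
Hypotheses (amF : antimatroid F B) (aB : a \notin B).

Lemma antimatroid_without : antimatroid (fam_without F a) B.
Proof.
have [BF supF unionF accF] := amF; split.
- by rewrite in_fam_without BF.
- by move=> X; rewrite in_fam_without => /andP [/supF].
- move=> X Y; rewrite !in_fam_without => /andP [XF aX] /andP [YF aY].
  by rewrite unionF // in_setU negb_or aX aY.
- move=> X; rewrite in_fam_without => /andP [XF aX] XB.
  have [x xXB X'F] := accF X XF XB; exists x => //.
  by rewrite in_fam_without X'F in_setD1 negb_and aX orbT.
Qed.

Hypothesis aBF : a |: B \in F.

Lemma antimatroid_with : antimatroid (fam_with F a) (a |: B).
Proof.
have [BF supF unionF accF] := amF; split.
- by rewrite in_fam_with aBF setU11.
- by move=> X; rewrite in_fam_with => /andP [XF aX]; rewrite subUset sub1set aX supF.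
- move=> X Y; rewrite !in_fam_with => /andP [XF aX] /andP [YF _].
  by rewrite unionF // in_setU aX.
move=> X; rewrite in_fam_with => /andP [XF aX] XaB.
have XB : X != B by apply: contraNneq aB => <-.
have [x /setDP [xX xB] X'F] := accF X XF XB.
have [xa | xa] := eqVneq x a; last first.
  exists x; first by rewrite in_setD in_setU1 negb_or xa xB xX.
  by rewrite in_fam_with X'F in_setD1 eq_sym xa aX.
(* [X :\ a] has left [fam_with F a]: remove a second vertex [y] and restore [a] by a union
   with [a |: B]. *)
subst x; have X'B : X :\ a != B by apply: contraNneq XaB => <-; rewrite setD1K.
have [y /setDP [/setD1P [ya yX] yB] X''F] := accF _ X'F X'B.
exists y; first by rewrite in_setD in_setU1 negb_or ya yB yX.
have -> : X :\ y = (X :\ a :\ y) :|: (a |: B).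
  apply/setP => z; rewrite !inE; have [-> | za] /= := eqVneq z a; first by rewrite eq_sym ya aX orbT.
  case zB : (z \in B); rewrite ?orbT ?orbF // (subsetP (supF X XF) _ zB) andbT.
  by apply: contraNneq yB => <-.
by rewrite in_fam_with unionF // in_setU setU11 orbT andbT.
Qed.

Lemma fam_without_setU1 X : X \in fam_without F a -> a |: X \in fam_with F a.
Proof.
have [_ supF unionF _] := amF; rewrite in_fam_without in_fam_with setU11 andbT.
by case/andP => XF _; rewrite -(setUidPr (supF X XF)) setUA unionF.
Qed.

Lemma card_without_le_with : #|fam_without F a| <= #|fam_with F a|.
Proof.
have inj : {in fam_without F a &, injective (fun X => a |: X)}.
  move=> X Y; rewrite !in_fam_without => /andP [_ aX] /andP [_ aY] eXY.
  by rewrite -(setU1K aX) -(setU1K aY) eXY.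
rewrite -(card_in_imset inj); apply/subset_leq_card/subsetP => _ /imsetP [X XF0 ->].
exact: fam_without_setU1.
Qed.

Lemma cube_of_without W : fam_without F a = cube B W ->
  #|fam_without F a| = #|fam_with F a| -> F = cube B (a |: W).
Proof.
move=> eF0 cardF01.
have img : [set a |: X | X in fam_without F a] = fam_with F a.
  apply/eqP; rewrite eqEcard card_in_imset ?cardF01 ?leqnn ?andbT.
    by apply/subsetP => _ /imsetP [X XF0 ->]; apply: fam_without_setU1.
  move=> X Y; rewrite !in_fam_without => /andP [_ aX] /andP [_ aY] eXY.
  by rewrite -(setU1K aX) eXY setU1K.
apply/setP => Y; rewrite [RHS]inE.
have [aY | aY] := boolP (a \in Y); last first.
  have -> : (Y \in F) = (Y \in fam_without F a) by rewrite in_fam_without aY andbT.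
  rewrite eF0 inE; congr (_ && _); apply/idP/idP => [|sYBW].
    by move/subset_trans; apply; rewrite setUCA subsetUr.
  apply/subsetP => z zY; move: (subsetP sYBW z zY); rewrite !inE.
  by case: eqVneq => [za | //]; move: aY; rewrite -za zY.
have -> : (Y \in F) = (Y :\ a \in fam_without F a).
  apply/idP/idP => [YF | ].
    have : Y \in fam_with F a by rewrite in_fam_with YF aY.
    rewrite -img => /imsetP [Z ZF0 ->].
    have /andP [_ aZ] : (Z \in F) && (a \notin Z) by rewrite -in_fam_without.
    by rewrite setU1K.
  move=> Y'F0; have : a |: (Y :\ a) \in fam_with F a by rewrite -img; apply: imset_f.
  by rewrite setD1K // in_fam_with => /andP [].
rewrite eF0 inE -(setD1K aY) setU1K ?setD11 //; congr (_ && _).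
  apply/idP/idP => [sBY | sB]; first exact: subset_trans sBY (subsetUr _ _).
  apply/subsetP => z zB; move: (subsetP sB z zB); rewrite in_setU1.
  by case: eqVneq => [za | //]; move: aB; rewrite -za zB.
rewrite subUset sub1set !in_setU set11 orbT /=.
apply/idP/idP => [sYW | sY]; first by apply: subset_trans sYW _; apply/setUS/subsetUr.
apply/subsetP => z /setD1P [za zY]; move: (subsetP sY z).
by rewrite !in_setU in_set1 (negbTE za) in_setD1 za zY => /(_ isT).
Qed.

End Atom.

Lemma excess_split F B a : a \notin B ->
  excess F B = excess (fam_without F a) B + excess (fam_with F a) (a |: B) + #|fam_with F a|.
Proof.
move=> aB; rewrite /excess (big_setID [set X : {set V} | a \in X]) /= addnC -addnA; congr addn.
rewrite -sum1_card -big_split /=; apply: eq_bigr => X; rewrite in_fam_with => /andP [_ aX].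
by rewrite (@card_setD1D _ _ a) ?in_setD ?aX ?aB // setDDl addn1.
Qed.

Lemma split_of_cube F B a W : F = cube B W -> a \notin B -> a |: B \in F ->
  [/\ fam_without F a = cube B (W :\ a), fam_with F a = cube (a |: B) W
    & #|fam_with F a| <= #|fam_without F a|].
Proof.
move=> -> aB; rewrite inE subsetU1 subUset sub1set subsetUl andbT in_setU (negbTE aB) /= => aW.
have eBa : B :\ a = B by apply/setDidPl; rewrite disjoint_sym disjoints1.
split.
- apply/setP => Y; rewrite in_fam_without !inE -andbA; congr (_ && _).
  by rewrite -subsetD1 setDUl eBa.
- have aBW : [set a] \subset B :|: W by rewrite sub1set in_setU aW orbT.
  apply/setP => Y; rewrite in_fam_with !inE subUset sub1set -setUA (setUidPr aBW).
  by case: (a \in Y); rewrite /= ?andbT ?andbF.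
have inj : {in fam_with (cube B W) a &, injective (fun X => X :\ a)}.
  move=> X Y; rewrite !in_fam_with => /andP [_ aX] /andP [_ aY] eXY.
  by rewrite -(setD1K aX) -(setD1K aY) eXY.
rewrite -(card_in_imset inj); apply/subset_leq_card/subsetP => _ /imsetP [X + ->].
rewrite in_fam_with in_fam_without !inE eqxx andbT => /andP [/andP [BX XBW] _].
by rewrite -{1}eBa setSD //= (subset_trans (subD1set _ _) XBW).
Qed.

Theorem excess_lower F B : antimatroid F B ->
  (INR #|F| * log2 (INR #|F|) <= 2 * INR (excess F B))%R /\
  ((INR #|F| * log2 (INR #|F|) = 2 * INR (excess F B))%R <-> exists W, F = cube B W).
Proof.
have [n] := ubnP #|F|; elim: n F B => // n IH F B /ltnSE leFn amF.
have [BF supF _ accF] := amF.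
have [eFB | neFB] := eqVneq F [set B].
  have cube0 : F = cube B set0.
    by rewrite eFB; apply/setP => X; rewrite !inE setU0 eqEsubset andbC.
  rewrite eFB /excess big_set1 setDv cards0 cards1 /log2 ln_1 -eFB.
  have -> : (INR 1 * (0 / ln 2) = 2 * INR 0)%R by rewrite /Rdiv Rmult_0_l Rmult_0_r /=; ring.
  by split; [apply: Rle_refl | split => _; first exists set0].
have [X /setD1P [XB XF]] : exists X, X \in F :\ B.
  by apply/set0Pn; apply: contraNneq neFB => FB0; rewrite -(setD1K BF) FB0 setU0.
have [a aB aBF] := accessible_atom accF XF XB.
set F0 := fam_without F a; set F1 := fam_with F a.
have cardF : #|F| = #|F0| + #|F1| by rewrite addnC cardsID.
have F0B : B \in F0 by rewrite in_fam_without BF.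
have F1aB : a |: B \in F1 by rewrite in_fam_with aBF setU11.
have lt0 : #|F0| < #|F| by rewrite cardF -addn1 leq_add2l card_gt0; apply/set0Pn; exists (a |: B).
have lt1 : #|F1| < #|F| by rewrite cardF -add1n leq_add2r card_gt0; apply/set0Pn; exists B.
have [low0 eq0] := IH F0 B (leq_trans lt0 leFn) (antimatroid_without amF aB).
have [low1 eq1] := IH F1 (a |: B) (leq_trans lt1 leFn) (antimatroid_with amF aB aBF).
have x0_gt0 : (0 < INR #|F0|)%R by apply/lt_0_INR/ltP; rewrite card_gt0; apply/set0Pn; exists B.
have le01 : (INR #|F0| <= INR #|F1|)%R by apply/le_INR/leP; apply: card_without_le_with amF aBF.
have [lowR eqR] := xlog2x_add x0_gt0 le01.
rewrite cardF (excess_split _ aB) -/F0 -/F1 !plus_INR.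
split; first by lra.
split => [eqF | [W eFW]].
  have card01 : #|F0| = #|F1| by apply/INR_eq/eqR; lra.
  have [W eW] : exists W, F0 = cube B W by apply/eq0; lra.
  by exists (a |: W); apply: (cube_of_without amF aB aBF eW).
have [cube0 cube1 le10] := split_of_cube eFW aB aBF.
have card01 : INR #|F0| = INR #|F1|.
  by congr INR; apply/eqP; rewrite eqn_leq le10 (card_without_le_with amF aBF).
have := proj2 eq0 (ex_intro _ _ cube0); have := proj2 eq1 (ex_intro _ _ cube1).
have := proj2 eqR card01; lra.
Qed.

End SetSystems.

(** * The family of vertex sets of sub-k-trees *)

Section SubKTrees.
Variable V : finType.
Variables (k : nat) (S : {set V}) (E : {set {set V}}) (C : {set V}).
Hypotheses (kt : ktree k S E) (k_gt0 : 0 < k) (kC : nclique S E k C).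
Implicit Types (X Y D : {set V}).

Let CS : C \subset S. Proof. by case/ncliqueP: kC. Qed.
Let cC : clique E C. Proof. by case/ncliqueP: kC. Qed.
Let cardC : #|C| = k. Proof. by case/ncliqueP: kC. Qed.

Definition subtree_vsets : {set {set V}} := [set X | `[< kbuilt k E C X >]].
Local Notation F := subtree_vsets.

Lemma subtree_vsetsP X : reflect (kbuilt k E C X) (X \in F).
Proof. by rewrite inE; apply: asboolP. Qed.

(* Compare the edge count of [w |: X] in the k-tree with the exact count for [X]. *)
Lemma kbuilt_nbhd_le X w : kbuilt k E C X -> w \in S -> w \notin X -> #|nbhd E w :&: X| <= k.
Proof.
move=> bX wS wX; have XS := kbuilt_sub kt k_gt0 CS bX.
have kX : k <= #|X| by rewrite -cardC subset_leq_card ?(kbuilt_sup bX).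
have wXS : w |: X \subset S by rewrite subUset sub1set wS XS.
have kwX : k <= #|w |: X| by rewrite cardsU1 wX (leq_trans kX).
have := ktree_edge_count_le kt wXS kwX; rewrite card_setI_cedgesU1 // cardsU1 wX.
by move: (kbuilt_edge_count cC cardC bX); clear; lia.
Qed.

Lemma kbuilt_nbhd_eq X Y w : kbuilt k E C X -> w \in S -> w \notin X -> Y \subset X ->
  #|nbhd E w :&: Y| = k -> nbhd E w :&: X = nbhd E w :&: Y.
Proof.
move=> bX wS wX YX cardY; apply/eqP; rewrite eq_sym eqEcard setIS //= cardY.
exact: kbuilt_nbhd_le.
Qed.

Lemma kbuiltU X Y : kbuilt k E C X -> kbuilt k E C Y -> kbuilt k E C (X :|: Y).
Proof.
move=> bX; elim => [|Y0 w bY0 IH wY0 cardN cN]; first by rewrite (setUidPl (kbuilt_sup bX)).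
have wS : w \in S.
  by have := kbuilt_sub kt k_gt0 CS (kbuiltU1 bY0 wY0 cardN cN); rewrite subUset sub1set => /andP [].
rewrite setUCA; have [wXY0 | wXY0] := boolP (w \in X :|: Y0).
  by rewrite (setUidPr _) // sub1set.
by apply: kbuiltU1; rewrite // (kbuilt_nbhd_eq IH wS wXY0 (subsetUr X Y0) cardN).
Qed.

(* Vertices of a sub-k-tree enter with [k] neighbours, already the maximum in [T], so no
   edge of [T] is missed. *)
Lemma kbuilt_subgraph (E' : {set {set V}}) X : E' \subset E -> cedges C \subset E' ->
  kbuilt k E' C X -> kbuilt k E C X /\ E :&: cedges X \subset E'.
Proof.
move=> E'E cE'; elim => [|X0 w _ [bX0 sX0] wX0 cardN cN].
  by split; [apply: kbuilt0 | rewrite (subset_trans (subsetIr _ _))].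
have wS : w \in S.
  have /card_gt0P [u] : 0 < #|nbhd E' w :&: X0| by rewrite cardN.
  by rewrite in_setI in_nbhd => /andP [/(subsetP E'E)/(ktree_edgeP kt) []].
have eN : nbhd E w :&: X0 = nbhd E' w :&: X0.
  apply/eqP; rewrite eq_sym eqEcard cardN kbuilt_nbhd_le // andbT.
  by apply/setSI/subsetP => u; rewrite !in_nbhd; apply: (subsetP E'E).
split; first by apply: kbuiltU1; rewrite ?eN //; apply: cliqueW cN.
rewrite setI_cedgesU1 // subUset sX0 eN /=.
by apply/subsetP => _ /imsetP [u /setIP [+ _] ->]; rewrite in_nbhd.
Qed.

Lemma subtree_vsetsE : subktrees k S E C = [set (X, E :&: cedges X) | X in F].
Proof.
apply/setP => -[S' E']; apply/idP/imsetP => [| [X /subtree_vsetsP bX [-> ->]]].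
  rewrite inE => /asboolP /= [S'S [E'E [kt' [CS' cE']]]].
  have /(ktree_kbuilt kt') bS' : nclique S' E' k C by apply/ncliqueP; rewrite clique_cedges.
  have [bS'E sS'] := kbuilt_subgraph E'E cE' bS'.
  exists S'; first exact/subtree_vsetsP.
  congr pair; apply/eqP; rewrite eqEsubset sS' andbT subsetI E'E.
  exact: ktree_edges kt'.
rewrite inE; apply/asboolP => /=; split; first exact: kbuilt_sub kt k_gt0 CS bX.
split; first exact: subsetIl.
split; first exact: kbuilt_ktree cC cardC bX.
split; first exact: kbuilt_sup bX.
by rewrite subsetI -clique_cedges cC cedgesS ?(kbuilt_sup bX).
Qed.

Lemma ktN_subtree_vsets : ktN k S E C = #|F|.
Proof. by rewrite /ktN subtree_vsetsE card_imset // => X Y []. Qed.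

Lemma sum_card_subktrees :
  \sum_(p in subktrees k S E C) #|p.1| = #|F| * k + excess F C.
Proof.
rewrite subtree_vsetsE big_imset /=; last by move=> X Y _ _ [].
rewrite /excess -sum_nat_const -big_split /=; apply: eq_bigr => X /subtree_vsetsP bX.
by rewrite -(cardsID C X) (setIidPr (kbuilt_sup bX)) cardC.
Qed.

Lemma subtree_vsets_base : C \in F.
Proof. exact/subtree_vsetsP/kbuilt0. Qed.

Lemma subtree_vsets_sup : {in F, forall X, C \subset X}.
Proof. by move=> X /subtree_vsetsP /kbuilt_sup. Qed.

Lemma subtree_vsets_sub : {in F, forall X, X \subset S}.
Proof. by move=> X /subtree_vsetsP /(kbuilt_sub kt k_gt0 CS). Qed.

Lemma subtree_vsets_top : S \in F.
Proof. exact/subtree_vsetsP/(ktree_kbuilt kt kC). Qed.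

Lemma subtree_vsets_accessible : accessible F C.
Proof.
move=> X /subtree_vsetsP [|X0 w bX0 wX0 _ _]; first by rewrite eqxx.
move=> _; exists w; last by rewrite setU1K //; apply/subtree_vsetsP.
by rewrite in_setD setU11 andbT; apply: contra wX0; apply: subsetP (kbuilt_sup bX0) w.
Qed.

Lemma subtree_vsetsU : {in F &, forall X Y, X :|: Y \in F}.
Proof. by move=> X Y /subtree_vsetsP bX /subtree_vsetsP bY; apply/subtree_vsetsP/kbuiltU. Qed.

Lemma subtree_vsets_antimatroid : antimatroid F C.
Proof.
split; [exact: subtree_vsets_base | exact: subtree_vsets_sup | exact: subtree_vsetsU |].
exact: subtree_vsets_accessible.
Qed.

Lemma subtree_vsetsU1 X w : X \in F -> w \notin X ->
  w |: X \in F <-> #|nbhd E w :&: X| = k /\ clique E (nbhd E w :&: X).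
Proof.
move=> /subtree_vsetsP bX wX; split => [wXF | [cardN cN]]; last exact/subtree_vsetsP/kbuiltU1.
have wS : w \in S by rewrite (subsetP (subtree_vsets_sub wXF)) ?setU11.
have wC : w \notin C by apply: contra wX; apply: subsetP (kbuilt_sup bX) w.
move/subtree_vsetsP: wXF => /kbuilt_mem_step /(_ (setU11 w X) wC) [X0 _ [X0X cardN cN]].
by rewrite setU1K // in X0X; rewrite (kbuilt_nbhd_eq bX wS wX X0X cardN).
Qed.

Lemma nbhd_sub x : nbhd E x \subset S.
Proof. by apply/subsetP => u; rewrite in_nbhd => /(ktree_edgeP kt) []. Qed.

Lemma nbhd_notin x : x \notin nbhd E x.
Proof. by rewrite in_nbhd; apply/negP => /(ktree_edgeP kt) [_ _]; rewrite eqxx. Qed.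

Lemma ncliqueU1 w D : w \in S -> D \subset nbhd E w -> clique E D -> #|D| = k ->
  nclique S E k.+1 (w |: D).
Proof.
move=> wS Dw cD cardD; apply/ncliqueP; split.
- by rewrite subUset sub1set wS (subset_trans Dw (nbhd_sub w)).
- exact: cliqueU1.
- by rewrite cardsU1 cardD (contra (subsetP Dw w) (nbhd_notin w)).
Qed.

Lemma nclique_sub_nbhd Q y : nclique S E k.+1 Q -> y \in Q -> Q \subset y |: nbhd E y.
Proof.
case/ncliqueP => _ /cliqueP cQ _ yQ; apply/subsetP => q qQ; rewrite in_setU1.
by case: eqVneq => //= qy; rewrite in_nbhd cQ // eq_sym.
Qed.

Lemma kleaf_nbhd y : y \in S -> #|nbhd E y| = k -> clique E (nbhd E y) -> kleaf k S E y.
Proof.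
move=> yS cardN cN; rewrite /kleaf yS /=.
suff -> : [set X | nclique S E k.+1 X && (y \in X)] = [set y |: nbhd E y] by rewrite cards1.
apply/setP => Q; rewrite !inE; apply/andP/eqP => [[kQ yQ] | ->]; last first.
  by rewrite setU11 ncliqueU1.
apply/eqP; rewrite eqEcard nclique_sub_nbhd //= cardsU1 (negbTE (nbhd_notin y)) cardN.
by case/ncliqueP: kQ => _ _ ->.
Qed.

Lemma not_kleaf y Q1 Q2 : nclique S E k.+1 Q1 -> nclique S E k.+1 Q2 ->
  y \in Q1 -> y \in Q2 -> Q1 != Q2 -> ~~ kleaf k S E y.
Proof.
move=> kQ1 kQ2 yQ1 yQ2 Q12; rewrite /kleaf negb_and; apply/orP; right.
suff : 2 <= #|[set X | nclique S E k.+1 X && (y \in X)]| by case: #|_| => [|[]].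
have <- : #|[set Q1; Q2]| = 2 by rewrite cards2 Q12.
apply/subset_leq_card/subsetP => Q.
by rewrite !inE => /orP [] /eqP ->; rewrite ?kQ1 ?kQ2 ?yQ1 ?yQ2.
Qed.

Lemma step_nclique X w : X \in F -> w \notin X -> w |: X \in F ->
  nclique S E k.+1 (w |: (nbhd E w :&: X)).
Proof.
move=> XF wX wXF; have [cardN cN] := (subtree_vsetsU1 XF wX).1 wXF.
by apply: ncliqueU1; rewrite ?subsetIl // (subsetP (subtree_vsets_sub wXF)) ?setU11.
Qed.

Lemma first_step_nbhd x : x \notin C -> x |: C \in F -> C \subset nbhd E x.
Proof.
move=> xC /(subtree_vsetsU1 subtree_vsets_base xC) [cardN _].
suff <- : nbhd E x :&: C = C by apply: subsetIl.
by apply/eqP; rewrite eqEcard subsetIr cardN cardC /=.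
Qed.

Section Cube.
Variable W : {set V}.
Hypothesis eFW : F = cube C W.

Lemma cube_mem X : C \subset X -> X \subset S -> X \in F.
Proof.
have := subtree_vsets_top; rewrite eFW !inE => /andP [_ SCW] CX XS.
by rewrite CX (subset_trans XS SCW).
Qed.

Lemma cube_C_nbhd x : x \in S -> x \notin C -> C \subset nbhd E x.
Proof.
move=> xS xC; apply: first_step_nbhd xC (cube_mem (subsetU1 _ _) _).
by rewrite subUset sub1set xS CS.
Qed.

(* Since [a] sees all of [C], seeing [b] too gives it [k + 1] neighbours in [b |: C]. *)
Lemma cube_not_last a b : a \notin C -> b \notin C -> b \in nbhd E a -> b |: C \in F ->
  a |: (b |: C) \notin F.
Proof.
move=> aC bC ba bCF; apply/negP => abCF.
have aS := subsetP (subtree_vsets_sub abCF) a (setU11 _ _).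
have ab : a != b by apply: contraNneq (nbhd_notin a) => eab; rewrite {1}eab.
have abC : a \notin b |: C by rewrite in_setU1 negb_or ab.
have [cardN _] := (subtree_vsetsU1 bCF abC).1 abCF.
have : b |: C \subset nbhd E a :&: (b |: C).
  by rewrite subsetI subxx andbT subUset sub1set ba cube_C_nbhd.
by move/subset_leq_card; rewrite cardN cardsU1 bC cardC ltnn.
Qed.

Lemma cube_nonadj x y : x \in S -> y \in S -> x \notin C -> y \notin C -> y \notin nbhd E x.
Proof.
move=> xS yS xC yC; apply/negP => yx.
have xy : x != y by apply: contraNneq (nbhd_notin x) => exy; rewrite {1}exy.
have CY : C \subset x |: (y |: C) by rewrite (subset_trans (subsetU1 y C)) ?subsetU1.
have YF : x |: (y |: C) \in F by rewrite cube_mem // !subUset !sub1set xS yS CS.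
have YC : x |: (y |: C) != C by apply: contraNneq xC => <-; rewrite setU11.
have [z /setDP [+ zC] YzF] := subtree_vsets_accessible YF YC.
rewrite !in_setU1 (negbTE zC) orbF => /orP [] /eqP ez; subst z.
  have xyC : x \notin y |: C by rewrite in_setU1 negb_or xy xC.
  by move: YzF; rewrite setU1K // => /(cube_not_last xC yC yx); rewrite YF.
have yxC : y \notin x |: C by rewrite in_setU1 negb_or eq_sym xy yC.
move: YzF; rewrite setUCA setU1K // => /(cube_not_last yC xC); rewrite -nbhdC setUCA YF.
by move/(_ yx).
Qed.

Lemma cube_kstar : is_kstar k S E C.
Proof.
rewrite /is_kstar CS cardC eqxx /=; apply/eqP/setP => e; rewrite in_setU.
apply/idP/orP => [eE | [eC | /imset2P [u b /setDP [uS uC] bC ->]]].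
- have /cedgesP [a [b [aS bS ab ee]]] := subsetP (ktree_edges kt) e eE; subst e.
  case aC: (a \in C); case bC: (b \in C).
  + by left; rewrite in_cedges2 aC bC ab.
  + right; apply/imset2P; exists b a => //; first by rewrite in_setD bC.
    by rewrite setUC.
  + by right; apply/imset2P; exists a b; rewrite // in_setD aC.
  + by have := cube_nonadj aS bS (negbT aC) (negbT bC); rewrite in_nbhd eE.
- by move: eC; apply/subsetP; rewrite -clique_cedges.
- by rewrite -in_nbhd (subsetP (cube_C_nbhd uS uC)).
Qed.

End Cube.

Lemma kstar_cube : is_kstar k S E C -> F = cube C S.
Proof.
case/andP => _ /eqP eE.
have NC x : x \in S -> x \notin C -> nbhd E x = C.
  move=> xS xC; apply/setP => u; rewrite in_nbhd eE in_setU in_cedges2 (negbTE xC) /=.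
  apply/imset2P/idP => [[u' b /setDP [u'S u'C] bC eub] | uC]; last first.
    by exists x u; rewrite // in_setD xC.
  have : x \in [set u'; b] by rewrite -eub setU11.
  rewrite !inE => /orP [/eqP xu' | /eqP xb]; last by move: xC; rewrite xb bC.
  by subst u'; move/set2_inj: eub => ->.
apply/setP => X; rewrite [in RHS]inE (setUidPr CS); apply/idP/idP => [XF | /andP [CX XS]].
  by rewrite subtree_vsets_sup ?subtree_vsets_sub.
have [n] := ubnP #|X|; elim: n X CX XS => // n IH X CX XS /ltnSE leXn.
have [-> | XC] := eqVneq X C; first exact: subtree_vsets_base.
have /set0Pn [x /setDP [xX xC]] : X :\: C != set0.
  by apply: contra XC; rewrite setD_eq0 => XC'; rewrite eqEsubset XC' CX.
have CX' : C \subset X :\ x by rewrite subsetD1 CX xC.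
have X'F : X :\ x \in F.
  by apply: IH; rewrite ?(subset_trans (subD1set _ _) XS) // (leq_trans (proper_card (properD1 xX))).
have eN : nbhd E x :&: (X :\ x) = C by rewrite NC ?(subsetP XS) // (setIidPl CX').
rewrite -(setD1K xX); apply/(subtree_vsetsU1 X'F); rewrite ?setD11 // eN; split => //.
Qed.

Lemma subtree_vsets_cube : (exists W, F = cube C W) <-> is_kstar k S E C.
Proof. by split => [[W /cube_kstar] // | /kstar_cube eF]; exists S. Qed.

Lemma subtree_vsets_grow X : X \in F -> X != S -> exists2 w, w \notin X & w |: X \in F.
Proof.
move=> XF XS.
suff grow Y : kbuilt k E C Y -> ~~ (Y \subset X) -> exists2 w, w \notin X & w |: X \in F.
  apply: (grow S (ktree_kbuilt kt kC)); apply: contra XS => SX.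
  by rewrite eqEsubset SX subtree_vsets_sub.
elim => [|Y0 w bY0 IH wY0 cardN cN]; first by rewrite subtree_vsets_sup.
have [Y0X | /IH //] := boolP (Y0 \subset X).
rewrite subUset sub1set Y0X andbT => wX; exists w => //.
rewrite -(setUidPl Y0X) -setUCA; apply: (subtree_vsetsU XF).
by apply/subtree_vsetsP/kbuiltU1.
Qed.

Lemma subtree_vsets_adds v : v \in S -> v \notin C ->
  exists X, [/\ X \in F, v \notin X & v |: X \in F].
Proof.
move=> vS vC; have [X bX [XS' cardN cN]] := kbuilt_mem_step (ktree_kbuilt kt kC) vS vC.
have vX : v \notin X by apply/negP => /(subsetP XS'); rewrite setD11.
by exists X; split; [apply/subtree_vsetsP | | apply/subtree_vsetsP/kbuiltU1].
Qed.

Lemma top_kleaf y : y \in S -> y \notin C -> S :\ y \in F -> kleaf k S E y.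
Proof.
move=> yS yC S'F; have yS' : y \notin S :\ y by rewrite setD11.
have SF : y |: (S :\ y) \in F by rewrite setD1K // subtree_vsets_top.
have [] := (subtree_vsetsU1 S'F yS').1 SF.
have -> : nbhd E y :&: (S :\ y) = nbhd E y.
  by apply/setIidPl; rewrite subsetD1 nbhd_sub nbhd_notin.
exact: kleaf_nbhd.
Qed.

Lemma kleaf_clique y Q : nclique S E k.+1 Q -> y \in Q -> nbhd E y \subset Q -> kleaf k S E y.
Proof.
move=> kQ yQ NQ; have /ncliqueP [QS cQ cardQ] := kQ.
have eN : nbhd E y = Q :\ y.
  apply/eqP; rewrite eqEsubset subsetD1 NQ nbhd_notin /=.
  by apply/subsetP => u /setD1P [uy uQ]; rewrite in_nbhd; move/cliqueP: cQ; apply; rewrite // eq_sym.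
apply: kleaf_nbhd; rewrite ?(subsetP QS) // eN ?(cliqueS (subD1set _ _) cQ) //.
by move: cardQ; rewrite (cardsD1 y Q) yQ => -[].
Qed.

Section Chain.
Hypothesis chF : chain F.

Lemma chain_card_inj X Y : X \in F -> Y \in F -> #|X| = #|Y| -> X = Y.
Proof.
move=> XF YF cardXY; apply/eqP; case/orP: (chainP _ chF X Y XF YF) => sXY.
  by rewrite eqEcard sXY cardXY leqnn.
by rewrite eq_sym eqEcard sXY cardXY leqnn.
Qed.

(* Otherwise [w] could be added before [t], giving a member incomparable with [t |: X]. *)
Lemma chain_step_adj X t w : X \in F -> t \notin X -> t |: X \in F ->
  w \notin t |: X -> w |: (t |: X) \in F -> t \in nbhd E w.
Proof.
move=> XF tX tXF wtX wtXF; apply/negPn/negP => tN.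
have [cardN cN] := (subtree_vsetsU1 tXF wtX).1 wtXF.
have eN : nbhd E w :&: (t |: X) = nbhd E w :&: X.
  by apply/setP => z; rewrite !in_setI in_setU1; case: eqVneq => [-> | _]; rewrite ?(negbTE tN).
have wX : w \notin X by apply: contra wtX; rewrite in_setU1 => ->; rewrite orbT.
have wXF : w |: X \in F by apply/(subtree_vsetsU1 XF wX); rewrite -eN.
case/orP: (chainP _ chF _ _ wXF tXF); rewrite subUset sub1set => /andP [+ _].
  by rewrite (negbTE wtX).
rewrite in_setU1 (negbTE tX) orbF => /eqP twE; by move: wtX; rewrite twE setU11.
Qed.

Lemma chain_kleaf_outside v l : v \in S -> v \notin C -> kleaf k S E v ->
  S :\ l \in F -> l \in S -> v = l.
Proof.
move=> vS vC vleaf S'F lS; have [X [XF vX vXF]] := subtree_vsets_adds vS vC.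
have [eS | nS] := eqVneq (v |: X) S.
  have eX : S :\ v = X by rewrite -eS setU1K.
  have : S :\ v = S :\ l.
    apply: chain_card_inj => //; first by rewrite eX.
    by move: (cardsD1 v S) (cardsD1 l S); rewrite vS lS /=; lia.
  by move/setP/(_ l); rewrite !in_setD1 eqxx lS andbT => /eqP.
have [w wvX wF] := subtree_vsets_grow vXF nS.
have vw := chain_step_adj XF vX vXF wvX wF.
have Q12 : v |: (nbhd E v :&: X) != w |: (nbhd E w :&: (v |: X)).
  apply: contraNneq wvX => eQ; have : w \in v |: (nbhd E v :&: X) by rewrite eQ setU11.
  by rewrite !in_setU1 in_setI => /orP [-> | /andP [_ ->]]; rewrite ?orbT.
have := not_kleaf (step_nclique XF vX vXF) (step_nclique vXF wvX wF) (setU11 _ _) _ Q12.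
by rewrite vleaf in_setU1 in_setI vw setU11 orbT => /(_ isT).
Qed.

Section FirstStep.
(* [v1] and [v2] are the first two vertices added to [C]; [c] is the vertex of [v1 |: C]
   not seen by [v2]. *)
Variables (v1 v2 c : V).
Hypotheses (v1C : v1 \notin C) (X1F : v1 |: C \in F).
Hypotheses (v2X1 : v2 \notin v1 |: C) (X2F : v2 |: (v1 |: C) \in F).
Hypotheses (Cc : c \in C) (cN2 : c \notin nbhd E v2).

(* Each later vertex [w] is adjacent to its predecessor [t], which by induction does not see [c]. *)
Lemma chain_first_nonadj X w : X \in F -> w \notin X -> w |: X \in F -> w \notin v1 |: C ->
  c \notin nbhd E w.
Proof.
have [n] := ubnP #|X|; elim: n X w => // n IH X w /ltnSE leXn XF wX wXF wX1.
have X1X : v1 |: C \subset X.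
  case/orP: (chainP _ chF _ _ wXF X1F) => [/subsetP/(_ w (setU11 _ _)) wX1' | sX1].
    by rewrite wX1' in wX1.
  apply/subsetP => x xX1; move: (subsetP sX1 x xX1); rewrite in_setU1.
  by case: eqVneq => [exw _ | //]; move: wX1; rewrite -exw xX1.
have [eX | neX] := eqVneq X (v1 |: C).
  have card12 : #|w |: X| = #|v2 |: (v1 |: C)| by rewrite eX in wX *; rewrite !cardsU1 wX v2X1.
  have /setP/(_ w) := chain_card_inj wXF X2F card12.
  by rewrite setU11 in_setU1 (negbTE wX1) orbF => /esym/eqP ->.
have XC : X != C by apply: contraNneq v1C => eXC; rewrite -eXC (subsetP X1X) ?setU11.
have [t /setDP [tX tC] X'F] := subtree_vsets_accessible XF XC.
have tv1 : t != v1.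
  apply: contraNneq neX => etv1; subst t; rewrite eq_sym eqEcard X1X /=.
  case/orP: (chainP _ chF _ _ X'F X1F) => [sX' | /subsetP/(_ v1 (setU11 _ _))]; last by rewrite setD11.
  by apply: subset_leq_card; rewrite -(setD1K tX) subUset sub1set setU11 sX'.
have tX' : t \notin X :\ t by rewrite setD11.
have tw : t \in nbhd E w by apply: (chain_step_adj X'F tX'); rewrite setD1K.
apply/negP => cw; have [_ cNw] := (subtree_vsetsU1 XF wX).1 wXF.
have ct : c \in nbhd E t.
  have cX : c \in X := subsetP (subtree_vsets_sup XF) c Cc.
  rewrite in_nbhd; move/cliqueP: cNw; apply; rewrite ?in_setI ?tw ?cw ?tX ?cX //.
  by apply: contraNneq tC => ->.
have tXF : t |: (X :\ t) \in F by rewrite setD1K.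
have := IH (X :\ t) t (leq_trans (proper_card (properD1 tX)) leXn) X'F tX' tXF.
by rewrite in_setU1 negb_or tv1 tC ct => /(_ isT).
Qed.

Lemma chain_first_kleaf : kleaf k S E c.
Proof.
have NX1 : nbhd E c \subset v1 |: C.
  apply/subsetP => u uc; apply/negPn/negP => uX1.
  have uC : u \notin C by apply: contra uX1; rewrite in_setU1 => ->; rewrite orbT.
  have [X [XF uX uXF]] := subtree_vsets_adds (subsetP (nbhd_sub c) u uc) uC.
  by have := chain_first_nonadj XF uX uXF uX1; rewrite nbhdC uc.
apply: kleaf_clique NX1; rewrite ?in_setU1 ?Cc ?orbT //.
apply: ncliqueU1; rewrite ?cardC ?first_step_nbhd //.
by rewrite (subsetP (subtree_vsets_sub X1F)) ?setU11.
Qed.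

Lemma chain_first_nonleaf v : v \in C -> v != c -> ~~ kleaf k S E v.
Proof.
move=> vC vc; have [cardN _] := (subtree_vsetsU1 X1F v2X1).1 X2F.
have cardX1 : #|v1 |: C| = k.+1 by rewrite cardsU1 v1C cardC.
have eN : nbhd E v2 :&: (v1 |: C) = (v1 |: C) :\ c.
  apply/eqP; rewrite eqEcard subsetD1 subsetIr in_setI (negbTE cN2) /=.
  by rewrite cardN -ltnS -cardX1 (cardsD1 c (v1 |: C)) in_setU1 Cc orbT.
have vX1 : v \in v1 |: C by rewrite in_setU1 vC orbT.
have X1S : v1 |: C \subset S := subtree_vsets_sub X1F.
have kX1 : nclique S E k.+1 (v1 |: C).
  apply: ncliqueU1; rewrite ?cardC ?first_step_nbhd //.
  by rewrite (subsetP X1S) ?setU11.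
apply: (not_kleaf kX1 (step_nclique X1F v2X1 X2F) vX1).
  by rewrite eN in_setU1 in_setD1 vc vX1 orbT.
by apply: contraNneq v2X1 => ->; rewrite setU11.
Qed.

End FirstStep.
End Chain.

Lemma kleaf_complete y : nclique S E k.+1 S -> y \in S -> kleaf k S E y.
Proof. by move=> kS yS; apply: kleaf_clique kS yS (nbhd_sub y). Qed.

Lemma chain_path_type : k < #|S| -> chain F -> path_type k S E /\ simplicial k S E C.
Proof.
move=> ltkS chF.
have SC : S != C by apply: contraTneq ltkS => ->; rewrite cardC ltnn.
have [v1 v1C X1F] := accessible_atom subtree_vsets_accessible subtree_vsets_top SC.
have kX1 : nclique S E k.+1 (v1 |: C).
  apply: ncliqueU1; rewrite ?cardC ?first_step_nbhd //.
  by rewrite (subsetP (subtree_vsets_sub X1F)) ?setU11.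
have [c0 c0C] : exists c0, c0 \in C by apply/set0Pn; rewrite -card_gt0 cardC.
have [eS | nS] := eqVneq (v1 |: C) S.
  rewrite eS in kX1; have /ncliqueP [_ cS cardS] := kX1.
  split; last by apply/existsP; exists c0; rewrite c0C kleaf_complete ?(subsetP CS).
  apply/orP; left; apply/orP; right; rewrite /is_K cardS eqxx eqEsubset (ktree_edges kt) /=.
  by rewrite -clique_cedges.
have [v2 v2X1 X2F] := subtree_vsets_grow X1F nS.
have [cardN _] := (subtree_vsetsU1 X1F v2X1).1 X2F.
have v1N2 : v1 \in nbhd E v2 := chain_step_adj chF subtree_vsets_base v1C X1F v2X1 X2F.
have /set0Pn [c /setDP [cX1 cN]] : (v1 |: C) :\: nbhd E v2 != set0.
  apply/negP; rewrite setD_eq0 => /setIidPr eN.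
  by move: cardN; rewrite eN cardsU1 v1C cardC /=; lia.
have Cc : c \in C by move: cX1; rewrite in_setU1 => /orP [/eqP ecv1 | //]; move: cN; rewrite ecv1 v1N2.
have cleaf := chain_first_kleaf chF v1C X1F v2X1 X2F Cc cN.
have [l /setDP [lS lC] S'F] := subtree_vsets_accessible subtree_vsets_top SC.
have lleaf := top_kleaf lS lC S'F.
have leaves : [set v in S | kleaf k S E v] = [set c; l].
  apply/setP => v; rewrite !inE; apply/andP/orP => [[vS vleaf] | [] /eqP ->].
  - have [-> | vc] := eqVneq v c; first by left.
    have [vC | vC] := boolP (v \in C).
      by have := chain_first_nonleaf v1C X1F v2X1 X2F Cc cN vC vc; rewrite vleaf.
    by right; rewrite (chain_kleaf_outside chF vS vC vleaf S'F lS).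
  - by rewrite (subsetP CS) ?Cc ?cleaf.
  - by rewrite lS lleaf.
split; last by apply/existsP; exists c; rewrite Cc cleaf.
have cl : c != l by apply: contraNneq lC => <-.
by rewrite /path_type leaves cards2 cl /= orbT.
Qed.

Definition removable X := [set y in X :\: C | X :\ y \in F].

Lemma removable_top_kleaf : removable S \subset [set v in S | kleaf k S E v] :\: C.
Proof.
apply/subsetP => y /setIdP [/setDP [yS yC] S'F].
by rewrite in_setD yC inE yS top_kleaf.
Qed.

Lemma subtree_vsets_deg X x : X \in F -> k < #|X| -> x \in X -> k <= #|nbhd E x :&: X|.
Proof.
move=> /subtree_vsetsP; elim => [|X0 w bX0 IH wX0 cardN cN]; first by rewrite cardC ltnn.
move=> ltkX; rewrite in_setU1 => /orP [/eqP -> | xX0].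
  by rewrite -cardN subset_leq_card // setIS // subsetU1.
have [ltkX0 | leX0k] := ltnP k #|X0|.
  by rewrite (leq_trans (IH ltkX0 xX0)) // subset_leq_card // setIS // subsetU1.
have eX0 : X0 = C by apply/eqP; rewrite eq_sym eqEcard (kbuilt_sup bX0) cardC.
subst X0; have NC : C \subset nbhd E w.
  suff <- : nbhd E w :&: C = C by apply: subsetIl.
  by apply/eqP; rewrite eqEcard subsetIr cardN cardC /=.
have sub : w |: (C :\ x) \subset nbhd E x :&: (w |: C).
  apply/subsetP => z; rewrite in_setU1 in_setD1 => /orP [/eqP -> | /andP [zx zC]].
    by rewrite in_setI nbhdC (subsetP NC) ?setU11.
  rewrite in_setI in_setU1 zC orbT andbT in_nbhd.
  by move/cliqueP: cC; apply; rewrite // eq_sym.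
apply: leq_trans (subset_leq_card sub).
by rewrite cardsU1 in_setD1 (negbTE wX0) andbF -cardC (cardsD1 x C) xX0.
Qed.

Lemma removable_setU1 X w : X \in F -> w \notin X -> w |: X \in F ->
  w |: (removable X :\: nbhd E w) \subset removable (w |: X).
Proof.
move=> XF wX wXF; have wC : w \notin C by apply: contra wX; apply: subsetP (subtree_vsets_sup XF) w.
apply/subsetP => y; rewrite in_setU1 => /orP [/eqP -> | /setDP [/setIdP [/setDP [yX yC] X'F] yN]].
  by apply/setIdP; rewrite in_setD setU11 wC setU1K.
have yw : y != w by apply: contraNneq wX => <-.
apply/setIdP; split; first by rewrite in_setD yC in_setU1 yX orbT.
have -> : (w |: X) :\ y = w |: (X :\ y).
  by apply/setP => z; rewrite !inE; case: (eqVneq z w) => [-> | _] //=; rewrite eq_sym yw.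
have eN : nbhd E w :&: (X :\ y) = nbhd E w :&: X.
  by apply/setP => z; rewrite !in_setI in_setD1; case: (eqVneq z y) => [-> | _] //=; rewrite (negbTE yN).
have wX' : w \notin X :\ y by rewrite in_setD1 negb_and wX orbT.
by apply/(subtree_vsetsU1 X'F wX'); rewrite eN -(subtree_vsetsU1 XF wX).
Qed.

(* Two removable neighbours [y], [z] of [w] are adjacent, so removing [y] would leave [z]
   only [k - 1] neighbours. *)
Lemma card_removable_nbhd X w : X \in F -> k.+1 < #|X| -> w \notin X -> w |: X \in F ->
  #|removable X :&: nbhd E w| <= 1.
Proof.
move=> XF ltX wX wXF; have [_ cN] := (subtree_vsetsU1 XF wX).1 wXF.
rewrite leqNgt; apply/negP => /card_gt1P [y [z []]].
move=> /setIP [/setIdP [/setDP [yX yC] Y'F] yN] /setIP [/setIdP [/setDP [zX zC] Z'F] zN] yz.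
have zy : z \in nbhd E y.
  by rewrite in_nbhd; move/cliqueP: cN; apply; rewrite ?in_setI ?yN ?zN ?yX ?zX.
have zZ' : z \notin X :\ z by rewrite setD11.
have zZF : z |: (X :\ z) \in F by rewrite setD1K.
have [cardNz _] := (subtree_vsetsU1 Z'F zZ').1 zZF.
have yNz : y \in nbhd E z :&: (X :\ z) by rewrite in_setI -nbhdC zy in_setD1 yX andbT.
have eN : nbhd E z :&: (X :\ y) = (nbhd E z :&: (X :\ z)) :\ y.
  apply/setP => u; rewrite !(in_setI, in_setD1).
  case: (eqVneq u z) => [-> | _] /=; last by rewrite andbCA.
  by rewrite (negbTE (nbhd_notin z)) /= !andbF.
have ltkY : k < #|X :\ y| by move: ltX; rewrite (cardsD1 y X) yX add1n ltnS.
have zY : z \in X :\ y by rewrite in_setD1 zX andbT eq_sym.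
have := subtree_vsets_deg Y'F ltkY zY; rewrite eN.
have := cardsD1 y (nbhd E z :&: (X :\ z)); rewrite yNz cardNz.
by move: k_gt0; clear; lia.
Qed.

Lemma card_removable_step X w : X \in F -> w \notin X -> w |: X \in F ->
  #|removable X| <= #|removable (w |: X)|.
Proof.
move=> XF wX wXF.
have wR : w \in removable (w |: X) by rewrite (subsetP (removable_setU1 XF wX wXF)) ?setU11.
have [ltX | leX] := ltnP k.+1 #|X|; last first.
  have : #|removable X| <= 1.
    apply: leq_trans (_ : #|X :\: C| <= 1).
      by apply/subset_leq_card/subsetP => y /setIdP [].
    by move: leX; rewrite -(cardsID C X) (setIidPr (subtree_vsets_sup XF)) cardC; lia.
  by move/leq_trans; apply; rewrite card_gt0; apply/set0Pn; exists w.
have wRX : w \notin removable X :\: nbhd E w.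
  by apply: contra wX => /setDP [/setIdP [/setDP []]].
have := subset_leq_card (removable_setU1 XF wX wXF); rewrite cardsU1 wRX /=.
have := cardsID (nbhd E w) (removable X); have := card_removable_nbhd XF ltX wX wXF.
lia.
Qed.

Lemma card_removable_le_top X : X \in F -> #|removable X| <= #|removable S|.
Proof.
move=> XF.
suff mono Y : kbuilt k E C Y -> forall X, X \in F -> #|removable X| <= #|removable (X :|: Y)|.
  by rewrite -(setUidPr (subtree_vsets_sub XF)); apply: mono (ktree_kbuilt kt kC) X XF.
elim => [|Y0 w bY0 IH wY0 cardN cN] X0 X0F; first by rewrite (setUidPl (subtree_vsets_sup X0F)).
have X0Y0F : X0 :|: Y0 \in F by apply: subtree_vsetsU X0F _; apply/subtree_vsetsP.
rewrite setUCA; have [wU | wU] := boolP (w \in X0 :|: Y0).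
  by rewrite (setUidPr _) ?sub1set // IH.
apply: leq_trans (IH X0 X0F) (card_removable_step X0Y0F wU _).
by rewrite -setUCA; apply: subtree_vsetsU X0F _; apply/subtree_vsetsP/kbuiltU1.
Qed.

Lemma path_type_chain : k < #|S| -> path_type k S E -> simplicial k S E C -> chain F.
Proof.
move=> ltkS pt /existsP [c /andP [Cc cleaf]].
set L := [set v in S | kleaf k S E v].
have remS : #|removable S| <= 1.
  apply: leq_trans (subset_leq_card removable_top_kleaf) _.
  case/orP: pt => [/orP [/andP [/eqP cardS _] | /andP [/eqP cardS _]] | /eqP cardL].
  - by move: ltkS; rewrite cardS ltnn.
  - apply: leq_trans (_ : #|S :\: C| <= 1).
      by apply/subset_leq_card/setSD/subsetP => v /setIdP [].
    by rewrite cardsD (setIidPr CS) cardS cardC subSnn.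
  - have cL : c \in L by rewrite inE cleaf (subsetP CS).
    apply: leq_trans (_ : #|L :\ c| <= 1); last by move: cardL; rewrite (cardsD1 c L) cL /=; lia.
    by apply/subset_leq_card/setDS; rewrite sub1set.
apply: (chain_of_unique_step subtree_vsets_sup subtree_vsets_accessible) => X a b XF aX bX aXF bXF.
apply/eqP/negPn/negP => ab.
have abXF : a |: (b |: X) \in F.
  have -> : a |: (b |: X) = (a |: X) :|: (b |: X).
    by apply/setP => z; rewrite !inE; case: (z == a); case: (z == b); case: (z \in X).
  exact: subtree_vsetsU.
have aC : a \notin C by apply: contra aX; apply: subsetP (subtree_vsets_sup XF) a.
have bC : b \notin C by apply: contra bX; apply: subsetP (subtree_vsets_sup XF) b.
have sub : [set a; b] \subset removable (a |: (b |: X)).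
  apply/subsetP => z /set2P [] ->; apply/setIdP; rewrite in_setD ?aC ?bC !in_setU1 ?eqxx ?orbT.
    by rewrite setU1K // in_setU1 negb_or ab.
  by rewrite setUCA setU1K // in_setU1 negb_or eq_sym ab.
have := leq_trans (subset_leq_card sub) (card_removable_le_top abXF).
by rewrite cards2 ab; move: remS; clear; lia.
Qed.

Lemma subtree_vsets_chain : k < #|S| -> chain F <-> path_type k S E /\ simplicial k S E C.
Proof.
by move=> ltkS; split => [/(chain_path_type ltkS) // | [pt sC]]; apply: path_type_chain.
Qed.

Lemma ktmuE : ktmu k S E C = (INR k + INR (excess F C) / INR #|F|)%R.
Proof.
rewrite /ktmu sum_card_subktrees ktN_subtree_vsets plus_INR mult_INR; field.
by apply/not_0_INR/eqP; rewrite -lt0n card_gt0; apply/set0Pn; exists C; apply: subtree_vsets_base.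
Qed.

End SubKTrees.

Lemma mean_bounds_iff (k N s : nat) : 0 < N ->
  let mu := (INR k + INR s / INR N)%R in
  [/\ (INR k + log2 (INR N) / 2 <= mu <-> INR N * log2 (INR N) <= 2 * INR s)%R,
      (INR k + log2 (INR N) / 2 = mu <-> INR N * log2 (INR N) = 2 * INR s)%R,
      (mu <= (INR N + 2 * INR k - 1) / 2)%R <-> 2 * s <= N * N.-1
    & mu = ((INR N + 2 * INR k - 1) / 2)%R <-> 2 * s = N * N.-1].
Proof.
move=> N_gt0 mu; have NR : (0 < INR N)%R by apply/lt_0_INR/ltP.
have twoR : (0 < 2)%R by lra.
have NR1 : INR N.-1 = (INR N - 1)%R by rewrite -(prednK N_gt0) S_INR /=; lra.
have -> : ((INR N + 2 * INR k - 1) / 2 = INR k + (INR N - 1) / 2)%R by field.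
have twoE m : INR (2 * m) = (2 * INR m)%R by rewrite mult_INR.
have predE : INR (N * N.-1) = (INR N * (INR N - 1))%R by rewrite mult_INR NR1.
rewrite /mu; split.
- split => h.
    have /(Rdiv_le_cross _ _ twoR NR) h' : (log2 (INR N) / 2 <= INR s / INR N)%R by lra.
    lra.
  have h' : (log2 (INR N) / 2 <= INR s / INR N)%R by apply/(Rdiv_le_cross _ _ twoR NR); lra.
  lra.
- split => h.
    have /(Rdiv_eq_cross _ _ NR twoR) h' : (INR s / INR N = log2 (INR N) / 2)%R by lra.
    lra.
  have h' : (INR s / INR N = log2 (INR N) / 2)%R by apply/(Rdiv_eq_cross _ _ NR twoR); lra.
  lra.
- split => [h | /leP/le_INR].
    have /(Rdiv_le_cross _ _ NR twoR) h' : (INR s / INR N <= (INR N - 1) / 2)%R by lra.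
    by apply/leP/INR_le; rewrite twoE predE; lra.
  rewrite twoE predE => h.
  have h' : (INR s / INR N <= (INR N - 1) / 2)%R by apply/(Rdiv_le_cross _ _ NR twoR); lra.
  lra.
split => h.
  have /(Rdiv_eq_cross _ _ NR twoR) h' : (INR s / INR N = (INR N - 1) / 2)%R by lra.
  by apply/INR_eq; rewrite twoE predE; lra.
have h' : (INR s / INR N = (INR N - 1) / 2)%R.
  by apply/(Rdiv_eq_cross _ _ NR twoR); have := f_equal INR h; rewrite twoE predE; lra.
lra.
Qed.

Theorem lemma4p2 (V : finType) (k : nat) (S : {set V}) (E : {set {set V}})
    (C : {set V}) :
  (0 < k)%nat -> ktree k S E -> nclique S E k C ->
  ((INR k + log2 (INR (ktN k S E C)) / 2 <= ktmu k S E C)%R /\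
   (ktmu k S E C <= (INR (ktN k S E C) + 2 * INR k - 1) / 2)%R) /\
  ((INR k + log2 (INR (ktN k S E C)) / 2)%R = ktmu k S E C
     <-> is_kstar k S E C) /\
  ((k.+1 <= #|S|)%nat ->
     (ktmu k S E C = ((INR (ktN k S E C) + 2 * INR k - 1) / 2)%R
       <-> path_type k S E /\ simplicial k S E C)).
Proof.
move=> k_gt0 kt kC; have amF := subtree_vsets_antimatroid kt k_gt0 kC.
have [_ supF _ accF] := amF.
have N_gt0 : 0 < #|subtree_vsets k E C| by apply/card_gt0P; exists C; apply: subtree_vsets_base.
have [lowE lowEq upE upEq] := mean_bounds_iff k (excess (subtree_vsets k E C) C) N_gt0.
have [low lowEqCube] := excess_lower amF.
have up := excess_leqif supF accF.
rewrite (ktmuE kt k_gt0 kC) (ktN_subtree_vsets kt k_gt0 kC).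
split; first by split; [apply/lowE | apply/upE; apply: up].
split; first exact: iff_trans lowEq (iff_trans lowEqCube (subtree_vsets_cube kt k_gt0 kC)).
move=> ltkS; apply: iff_trans upEq (iff_trans _ (subtree_vsets_chain kt k_gt0 kC ltkS)).
by rewrite -(eq_leqif up); apply: rwP eqP.
Qed.
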